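(* Fix $N\ge 2$, $\tau>0$, $\lambda>0$, $\mu\ge 0$ and $c\in\mathbb{R}$. Let $x_i,y_i$ ($i=1,\dots,N$) be the unit-norm embeddings by the labeled-data encoder $f_\theta$ of $N$ positive pairs, with $s^{\theta}_{ij}=\langle x_i,y_j\rangle$; let $z_i$ ($i=1,\dots,N$) be the unit-norm embeddings by the full-data encoder $g_\psi$ of a batch of $N$ molecules from the full dataset, with $s^{\psi}_{ij}=\langle z_i,z_j\rangle$; and let $u_i$ be the unit-norm embeddings of the same $N$ full-dataset molecules by $f_\theta$ with gradients detached, regarded as fixed vectors. Define the soft-label matrix $$\hat\Gamma=\arg\min_{\Gamma\in U(\mathbf 1_N,\mathbf 1_N)}\Big(\langle C^{fix},\Gamma\rangle+\frac{\lambda}{2}\|\Gamma\|_F^2\Big),\qquad C^{fix}_{ij}=c-\langle u_i,u_j\rangle,$$ and the losses $$\mathcal{L}_{sup}(\theta)=-\sum_{i=1}^N\log\frac{\exp(s^{\theta}_{ii}/\tau)}{\sum_{j=1}^N\exp(s^{\theta}_{ij}/\tau)},\qquad \mathcal{L}_{soft}(\psi)=-\sum_{i,j=1}^N\hat\Gamma_{ij}\log\frac{\exp(s^{\psi}_{ij}/\tau)}{\sum_{k=1}^N\exp(s^{\psi}_{ik}/\tau)},$$ $$\mathcal{L}_{reg}(\psi)=-\frac1N\sum_{i=1}^N\log\rho_i,\qquad \rho_i=\min_{j\ne i}\|z_i-z_j\|,$$ and $\mathcal{L}_{total}=\mathcal{L}_{sup}+\mathcal{L}_{soft}+\mu\mathcal{L}_{reg}$.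 Consider the IOT problem $$\min_{\theta,\psi}\ J(\theta,\psi)=KL(\Gamma^{g}\|\Gamma^{\theta})+KL(\hat\Gamma\|\Gamma^{\psi})+\mu\,\mathcal{L}_{reg}(\psi),$$ with $\Gamma^{g}_{ij}=\delta_{ij}/N$, $\Gamma^{\theta}=\arg\min_{\Gamma\in U(\frac1N\mathbf 1)}(\langle C^{\theta},\Gamma\rangle-\tau H(\Gamma))$, $\Gamma^{\psi}=\arg\min_{\Gamma\in U(\frac1N\mathbf 1)}(\langle C^{\psi},\Gamma\rangle-\tau H(\Gamma))$, $C^{\theta}_{ij}=c-s^{\theta}_{ij}$, $C^{\psi}_{ij}=c-s^{\psi}_{ij}$, and with $\hat\Gamma$ treated as fixed (independent of $\theta,\psi$). Then $\hat\Gamma$, $\Gamma^\theta$, $\Gamma^\psi$ are well defined (unique), and for all $\theta,\psi$, $$J(\theta,\psi)=\frac1N\mathcal{L}_{sup}(\theta)+\mathcal{L}_{soft}(\psi)+\mu\,\mathcal{L}_{reg}(\psi)+K,\qquad K=\sum_{i,j}\hat\Gamma_{ij}\log\hat\Gamma_{ij}+N\log N-N+1 .$$ Consequently $(\theta^*,\psi^* )$ minimizes $J$ if and only if $\theta^*$ minimizes $\mathcal{L}_{sup}$ and $\psi^*$ minimizes $\mathcal{L}_{soft}+\mu\mathcal{L}_{reg}$, if and only if $(\theta^*,\psi^* )$ minimizes $\mathcal{L}_{total}$; i.e. the optimal parameters of S-MolSearch are exactly the solutions of this IOT problem.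
   Context: For $a,b\in\mathbb{R}^N_{>0}$: $U(a)=\{\Gamma\in\mathbb{R}^{N\times N}_{\ge 0}:\Gamma\mathbf 1_N=a\}$ and $U(a,b)=\{\Gamma\in\mathbb{R}^{N\times N}_{\ge 0}:\Gamma\mathbf 1_N=a,\ \Gamma^{\top}\mathbf 1_N=b\}$, where $\mathbf 1_N$ is the all-ones vector. $\langle A,B\rangle=\sum_{ij}A_{ij}B_{ij}$ and $\|\cdot\|_F$ is the Frobenius norm. $H(\Gamma)=-\sum_{i,j}\Gamma_{ij}(\log\Gamma_{ij}-1)$. The generalized KL divergence is $KL(X\|Y)=\sum_{i,j}\big(X_{ij}\log\frac{X_{ij}}{Y_{ij}}-X_{ij}+Y_{ij}\big)$ with $0\log 0=0$. $\delta_{ij}$ is the Kronecker delta. Positive pairs $(x_i,y_i)$ are embeddings of two molecules that are active on the same protein target; $\mathcal{L}_{reg}$ is the KoLeo regularizer (assume the $z_i$ are pairwise distinct so that it is finite). Minimizers of the loss functions over the parameter spaces are assumed to be understood as global minimizers (the equivalences hold including the case where the minimizer sets are empty). *)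

From mathcomp Require Import all_boot all_order all_algebra.
From mathcomp Require Import reals sequences exp.

Set Implicit Arguments.
Unset Strict Implicit.
Unset Printing Implicit Defensive.

Import Order.TTheory GRing.Theory Num.Theory.
Local Open Scope ring_scope.

Section Defs.
Variable R : realType.

Definition dotv (d : nat) (a b : 'rV[R]_d) : R := \sum_(k < d) a 0 k * b 0 k.
Definition normv (d : nat) (a : 'rV[R]_d) : R := Num.sqrt (dotv a a).

Definition frob (N : nat) (A B : 'M[R]_N) : R := \sum_(i < N) \sum_(j < N) A i j * B i j.
Definition frob_sq (N : nat) (A : 'M[R]_N) : R := \sum_(i < N) \sum_(j < N) A i j ^+ 2.

Definition in_U (N : nat) (a : 'I_N -> R) (G : 'M[R]_N) : Prop :=
  (forall i j, 0 <= G i j) /\ (forall i, \sum_(j < N) G i j = a i).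
Definition in_U2 (N : nat) (a b : 'I_N -> R) (G : 'M[R]_N) : Prop :=
  in_U a G /\ (forall j, \sum_(i < N) G i j = b j).

(* H(Gamma) = - sum Gamma_ij (log Gamma_ij - 1)   (0 log 0 = 0: the factor 0 kills the term) *)
Definition entropy (N : nat) (G : 'M[R]_N) : R :=
  - \sum_(i < N) \sum_(j < N) G i j * (ln (G i j) - 1).

(* generalized KL divergence, 0 log 0 = 0 (again the factor X_ij = 0 kills the log term) *)
Definition KLdiv (N : nat) (X Y : 'M[R]_N) : R :=
  \sum_(i < N) \sum_(j < N) (X i j * ln (X i j / Y i j) - X i j + Y i j).

Definition is_minimizer (T : Type) (S : T -> Prop) (f : T -> R) (x : T) : Prop :=
  S x /\ forall y, S y -> f x <= f y.

Definition minimizes (T : Type) (f : T -> R) (x : T) : Prop :=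
  forall y, f x <= f y.

Definition sim (N d : nat) (a b : 'I_N -> 'rV[R]_d) : 'M[R]_N :=
  \matrix_(i, j) dotv (a i) (b j).

Definition cost (N : nat) (c : R) (S : 'M[R]_N) : 'M[R]_N :=
  \matrix_(i, j) (c - S i j).

Definition qot_obj (N : nat) (lam : R) (C : 'M[R]_N) (G : 'M[R]_N) : R :=
  frob C G + lam / 2 * frob_sq G.

Definition eot_obj (N : nat) (tau : R) (C : 'M[R]_N) (G : 'M[R]_N) : R :=
  frob C G - tau * entropy G.

Definition cst (N : nat) (v : R) : 'I_N -> R := fun _ => v.

Definition L_sup (N : nat) (tau : R) (S : 'M[R]_N) : R :=
  - \sum_(i < N) ln (expR (S i i / tau) / \sum_(j < N) expR (S i j / tau)).

Definition L_soft (N : nat) (tau : R) (Ghat S : 'M[R]_N) : R :=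
  - \sum_(i < N) \sum_(j < N)
      Ghat i j * ln (expR (S i j / tau) / \sum_(k < N) expR (S i k / tau)).

(* The neutral element of the iterated min is
   sum_j ||z_i - z_j||, which dominates every term; since N >= 2 the index set
   {j | j <> i} is nonempty, so this is exactly the minimum. *)
Definition rho (N d : nat) (z : 'I_N -> 'rV[R]_d) (i : 'I_N) : R :=
  \big[Num.min / \sum_(j < N) normv (z i - z j)]_(j < N | j != i) normv (z i - z j).

Definition L_reg (N d : nat) (z : 'I_N -> 'rV[R]_d) : R :=
  - (N%:R)^-1 * \sum_(i < N) ln (rho z i).

Definition Gamma_g (N : nat) : 'M[R]_N := \matrix_(i, j) ((i == j)%:R / N%:R).

End Defs.

(* Each entropic problem over U(1/N) is solved in closed form by the Gibbs plan
   (1/N) softmax(-C/tau), taken row by row: by Gibbs' inequality the objective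
   exceeds its value there by tau KL(Gamma || Gibbs).  The constant c cancels in
   the softmax, so KL(Gamma^g || Gamma^theta) = L_sup / N and
   KL(Ghat || Gamma^psi) = L_soft + K with K depending on Ghat only.  Hence J is
   L_total up to a positive rescaling of the theta-part and an additive
   constant, and its minimization separates in theta and psi.  The soft labels
   Ghat exist by compactness of the transport polytope and are unique because
   the quadratically regularized objective is strictly convex. *)

From mathcomp Require Import all_boot all_order all_algebra.
From mathcomp Require Import boolp classical_sets reals topology normedtype derive.
From mathcomp Require Import sequences exp ring lra.

Set Implicit Arguments.
Unset Strict Implicit.
Unset Printing Implicit Defensive.

Import Order.TTheory GRing.Theory Num.Theory numFieldNormedType.Exports.
Local Open Scope ring_scope.

Section PointwiseKL.
Variable R : realType.
Implicit Types g h t : R.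

Definition kl g h : R := g * ln (g / h) - g + h.

Lemma KLdivE N (X Y : 'M[R]_N) :
  KLdiv X Y = \sum_(i < N) \sum_(j < N) kl (X i j) (Y i j).
Proof. by []. Qed.

Lemma ln_le_subr1 t : 0 < t -> ln t <= t - 1.
Proof. by move=> t0; have := expR_ge1Dx (ln t); rewrite lnK ?posrE //; lra. Qed.

Lemma ln_lt_subr1 t : 0 < t -> t != 1 -> ln t < t - 1.
Proof.
move=> t0 t1; have := @expR_gt1Dx R (ln t); rewrite lnK ?posrE // ln_eq0 // t1.
by move=> /(_ isT); lra.
Qed.

Lemma klE g h : 0 <= g -> 0 < h -> kl g h = g * ln g - g * ln h - g + h.
Proof.
rewrite le_eqVlt => /predU1P[<- _|g0 h0]; first by rewrite /kl !mul0r !subr0.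
by rewrite /kl ln_div ?posrE // mulrBr.
Qed.

(* Reduces Gibbs' inequality to [ln t <= t - 1] with [t = h / g]. *)
Lemma kl_ratio g h : 0 < g -> 0 < h -> kl g h = g * (h / g - 1 - ln (h / g)).
Proof.
move=> g0 h0; rewrite klE ?ltW // ln_div ?posrE //.
by rewrite !mulrBr mulrCA divff ?gt_eqF // mulr1 mulr1; ring.
Qed.

Lemma kl_ge0 g h : 0 <= g -> 0 < h -> 0 <= kl g h.
Proof.
rewrite le_eqVlt => /predU1P[<- h0|g0 h0].
  by rewrite /kl !mul0r !subr0 add0r ltW.
rewrite kl_ratio //; apply: mulr_ge0; first exact: ltW.
by have := ln_le_subr1 (divr_gt0 h0 g0); lra.
Qed.

Lemma kl_eq0 g h : 0 <= g -> 0 < h -> kl g h = 0 -> g = h.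
Proof.
rewrite le_eqVlt => /predU1P[<- h0|g0 h0].
  by rewrite /kl !mul0r !subr0 add0r => h_eq0; move: h0; rewrite h_eq0 ltxx.
rewrite kl_ratio // => /eqP; rewrite mulf_eq0 gt_eqF //= subr_eq0 => /eqP ln_eq.
have [/divr1_eq ->//|hg1] := eqVneq (h / g) 1.
by have := ln_lt_subr1 (divr_gt0 h0 g0) hg1; rewrite ln_eq ltxx.
Qed.

Lemma kl_id g : 0 < g -> kl g g = 0.
Proof. by move=> g0; rewrite /kl divff ?gt_eqF // ln1 mulr0 sub0r addNr. Qed.

End PointwiseKL.

Section KLDivergence.
Variables (R : realType) (N : nat).
Implicit Types (F : 'I_N -> 'I_N -> R) (X Y : 'M[R]_N).

Lemma psum2_eq0 F : (forall i j, 0 <= F i j) ->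
  \sum_(i < N) \sum_(j < N) F i j = 0 -> forall i j, F i j = 0.
Proof.
move=> F0; rewrite pair_bigA /= => sum0 i j.
exact: (@psumr_eq0P _ _ xpredT (fun p => F p.1 p.2) (fun p _ => F0 p.1 p.2) sum0 (i, j)).
Qed.

Lemma KLdiv_ge0 X Y : (forall i j, 0 <= X i j) -> (forall i j, 0 < Y i j) ->
  0 <= KLdiv X Y.
Proof. by move=> X0 Y0; do 2!(apply: sumr_ge0 => ? _); apply: kl_ge0. Qed.

Lemma KLdiv_eq0 X Y : (forall i j, 0 <= X i j) -> (forall i j, 0 < Y i j) ->
  KLdiv X Y = 0 -> X = Y.
Proof.
move=> X0 Y0 /psum2_eq0 kl0; apply/matrixP => i j.
by apply: kl_eq0 => //; apply: kl0 => i' j'; apply: kl_ge0.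
Qed.

Lemma KLdiv_id X : (forall i j, 0 < X i j) -> KLdiv X X = 0.
Proof. by move=> X0; do 2!(apply: big1 => ? _); apply: kl_id. Qed.

End KLDivergence.

Section Softmax.
Variables (R : realType) (N : nat) (tau : R).
Implicit Types S : 'M[R]_N.

Definition softmax S : 'M[R]_N :=
  \matrix_(i, j) (expR (S i j / tau) / \sum_(k < N) expR (S i k / tau)).

Lemma sum_expR_gt0 (f : 'I_N -> R) (j : 'I_N) : 0 < \sum_(k < N) expR (f k).
Proof.
rewrite (bigD1 j) //= ltr_pwDl ?expR_gt0 //.
by apply: sumr_ge0 => k _; apply: expR_ge0.
Qed.

Lemma softmax_gt0 S i j : 0 < softmax S i j.
Proof. by rewrite mxE divr_gt0 ?expR_gt0 // (sum_expR_gt0 _ j). Qed.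

Lemma softmax_row_sum S i : \sum_(j < N) softmax S i j = 1.
Proof.
under eq_bigr do rewrite mxE.
by rewrite -mulr_suml divff // gt_eqF // (sum_expR_gt0 _ i).
Qed.

Lemma ln_softmax S i j :
  ln (softmax S i j) = S i j / tau - ln (\sum_(k < N) expR (S i k / tau)).
Proof. by rewrite mxE ln_div ?posrE ?expR_gt0 ?(sum_expR_gt0 _ j) // expRK. Qed.

Lemma softmax_cost c S : softmax (- cost c S) = softmax S.
Proof.
have shift k l : expR (- (c - S k l) / tau) = expR (- c / tau) * expR (S k l / tau).
  by rewrite -expRD opprB mulrBl addrC mulNr.
apply/matrixP => i j; rewrite !mxE shift.
under eq_bigr do rewrite !mxE shift.
by rewrite -mulr_sumr invfM mulrACA divff ?mul1r // gt_eqF ?expR_gt0.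
Qed.

Lemma L_supE S : L_sup tau S = - \sum_(i < N) ln (softmax S i i).
Proof. by congr (- _); apply: eq_bigr => i _; rewrite mxE. Qed.

Lemma L_softE G S :
  L_soft tau G S = - \sum_(i < N) \sum_(j < N) G i j * ln (softmax S i j).
Proof. by congr (- _); do 2!(apply: eq_bigr => ? _); rewrite mxE. Qed.

End Softmax.

Section EntropicOT.
Variables (R : realType) (N : nat) (tau : R).
Hypothesis tau_gt0 : 0 < tau.
Implicit Types (C G : 'M[R]_N).

Local Notation UN := (in_U (@cst R N (N%:R)^-1)).

Definition gibbs C : 'M[R]_N := (N%:R)^-1 *: softmax tau (- C).

Lemma gibbs_gt0 C i j : 0 < gibbs C i j.
Proof.
have N_gt0 : (0 < N)%N by apply: leq_ltn_trans (ltn_ord i).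
by rewrite mxE mulr_gt0 ?softmax_gt0 // invr_gt0 ltr0n.
Qed.

Lemma gibbs_in_U C : UN (gibbs C).
Proof.
split=> [i j|i]; first exact/ltW/gibbs_gt0.
under eq_bigr do rewrite mxE.
by rewrite -mulr_sumr softmax_row_sum mulr1.
Qed.

Lemma ln_gibbs C i j : ln (gibbs C i j) =
  - C i j / tau - ln N%:R - ln (\sum_(k < N) expR (- C i k / tau)).
Proof.
have N_gt0 : (0 < N)%N by apply: leq_ltn_trans (ltn_ord i).
rewrite mxE lnM ?posrE ?invr_gt0 ?ltr0n ?softmax_gt0 // lnV ?posrE ?ltr0n //.
rewrite ln_softmax mxE (eq_bigr (fun k => expR (- C i k / tau))) => [|k _].
  by ring.
by rewrite mxE.
Qed.

Lemma eot_objE C G : (forall i j, 0 <= G i j) ->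
  eot_obj tau C G = tau * KLdiv G (gibbs C) - tau * \sum_(i < N) \sum_(j < N)
    (gibbs C i j + (ln N%:R + ln (\sum_(k < N) expR (- C i k / tau))) * G i j).
Proof.
move=> G0; rewrite /eot_obj /entropy /frob KLdivE mulrN opprK -mulrBr -sumrB.
rewrite [X in _ + X]mulr_sumr -big_split mulr_sumr; apply: eq_bigr => i _ /=.
rewrite -sumrB !mulr_sumr -big_split; apply: eq_bigr => j _ /=.
rewrite klE ?gibbs_gt0 // ln_gibbs.
by field; rewrite gt_eqF.
Qed.

Lemma eot_obj_gibbsE C G : UN G ->
  eot_obj tau C G = eot_obj tau C (gibbs C) + tau * KLdiv G (gibbs C).
Proof.
move=> [G0 G_row]; have [g0 g_row] := gibbs_in_U C.
rewrite !eot_objE // (KLdiv_id (gibbs_gt0 C)) mulr0 sub0r addrC.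
congr (- (tau * _) + _); apply: eq_bigr => i _.
by rewrite !big_split /= -!mulr_sumr G_row g_row.
Qed.

Lemma eot_minimizerP C G : is_minimizer UN (eot_obj tau C) G <-> G = gibbs C.
Proof.
have KL_ge0 G' : UN G' -> 0 <= KLdiv G' (gibbs C).
  by case=> G'0 _; apply: KLdiv_ge0 => // i j; apply: gibbs_gt0.
split=> [[GU Gmin]|->]; last first.
  split=> [|G' G'U]; first exact: gibbs_in_U.
  rewrite (eot_obj_gibbsE C G'U) lerDl.
  by apply: mulr_ge0; [exact: ltW | exact: KL_ge0].
have := Gmin _ (gibbs_in_U C); rewrite (eot_obj_gibbsE C GU) gerDl.
rewrite pmulr_rle0 // => KL_le0.
apply: KLdiv_eq0; [by case: GU | exact: gibbs_gt0 |].
by apply/eqP; rewrite eq_le KL_le0 KL_ge0.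
Qed.

End EntropicOT.

Section QuadraticOT.
Variables (R : realType) (N : nat) (lam : R).
Implicit Types (C G : 'M[R]_N) (v : 'rV[R]_(N * N)).

Local Notation U11 := (in_U2 (@cst R N 1) (@cst R N 1)).

Local Open Scope classical_set_scope.

Lemma continuous_vec_mx_entry i j : continuous (fun v => vec_mx v i j).
Proof.
have -> : (fun v => vec_mx v i j) = fun v => v 0 (mxvec_index i j).
  by apply/funext => v; rewrite -[in RHS](vec_mxK v) mxvecE.
exact: coord_continuous.
Qed.

Lemma continuous_sum (T : topologicalType) (F : 'I_N -> T -> R) :
  (forall k, continuous (F k)) -> continuous (fun x => \sum_(k < N) F k x).
Proof. by move=> Fc; apply: continuous_big => //; exact: add_continuous. Qed.

Lemma continuous_sum2 (T : topologicalType) (F : 'I_N -> 'I_N -> T -> R) :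
  (forall i j, continuous (F i j)) ->
  continuous (fun x => \sum_(i < N) \sum_(j < N) F i j x).
Proof.
move=> Fc; apply: (@continuous_sum _ (fun i x => \sum_(j < N) F i j x)) => i.
exact: continuous_sum.
Qed.

Lemma continuous_quadratic (T : topologicalType) (g : T -> R) (a b : R) :
  continuous g -> continuous (fun x => a * g x + b * g x ^+ 2).
Proof.
move=> gc x; apply: cvgD; first by apply: cvgMl_tmp; apply: gc.
by apply: cvgMl_tmp; apply: cvgM; apply: gc.
Qed.

Lemma closed_forall (T : topologicalType) (I : Type) (P : I -> set T) :
  (forall i, closed (P i)) -> closed [set x | forall i, P i x].
Proof.
move=> Pcl; have -> : [set x | forall i, P i x] = \bigcap_(i in setT) P i.
  by apply/seteqP; split=> x /= Px i //; apply: Px.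
by apply: closed_bigI => i _; apply: Pcl.
Qed.

Lemma transport_polytope_compact : compact [set v | U11 (vec_mx v)].
Proof.
have entry_closed (g : 'rV[R]_(N * N) -> R) (D : set R) :
    continuous g -> closed D -> closed [set v | D (g v)].
  by move=> gc; apply: (continuous_closedP _).1.
apply: (subclosed_compact (A := [set v | U11 (vec_mx v)])
  (B := [set v | forall k, `[0, 1]%classic (v ord0 k)])).

- apply: closedI; first apply: closedI.
  + apply: closed_forall => i; apply: closed_forall => j.
    apply: (entry_closed (fun v => vec_mx v i j) [set x | 0 <= x]).
      exact: continuous_vec_mx_entry.
    exact: closed_ge.
  + apply: closed_forall => i.
    apply: (entry_closed (fun v => \sum_(j < N) vec_mx v i j) [set x | x = 1]).
      by apply: continuous_sum => j; apply: continuous_vec_mx_entry.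
    exact: closed_eq.
  + apply: closed_forall => j.
    apply: (entry_closed (fun v => \sum_(i < N) vec_mx v i j) [set x | x = 1]).
      by apply: continuous_sum => i; apply: continuous_vec_mx_entry.
    exact: closed_eq.
- have box := @rV_compact R (N * N) (fun=> `[0, 1]%classic).
  by apply: box => _; apply: segment_compact.
- move=> v [[v_ge0 v_row] _] k.
  case: (mxvec_indexP k) => i j; rewrite -[v]vec_mxK mxvecE /=.
  have := v_row i; rewrite /cst (bigD1 j) //= => row_i.
  rewrite in_itv /= v_ge0 -row_i lerDl.
  by apply: sumr_ge0 => ? _; apply: v_ge0.
Qed.

Lemma qot_objE C G :
  qot_obj lam C G = \sum_(i < N) \sum_(j < N) (C i j * G i j + lam / 2 * G i j ^+ 2).
Proof.
rewrite /qot_obj /frob /frob_sq mulr_sumr -big_split; apply: eq_bigr => i _ /=.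
by rewrite mulr_sumr -big_split.
Qed.

Lemma qot_minimizer_exists C : exists G, is_minimizer U11 (qot_obj lam C) G.
Proof.
have U11_id : U11 1%:M.
  have delta_sum (k : 'I_N) : \sum_(l < N) (k == l)%:R = 1 :> R.
    by rewrite (bigD1 k) //= eqxx big1 ?addr0 // => l; rewrite eq_sym => /negPf ->.
  split; [split=> [i j|i]|]; rewrite /cst.
  - by rewrite mxE ler0n.
  - by under eq_bigr do rewrite mxE; apply: delta_sum.
  - by move=> j; under eq_bigr do rewrite mxE eq_sym; apply: delta_sum.
have f_cont : continuous (fun v => qot_obj lam C (vec_mx v)).
  have -> : (fun v => qot_obj lam C (vec_mx v)) = fun v => \sum_(i < N) \sum_(j < N)
      (C i j * vec_mx v i j + lam / 2 * vec_mx v i j ^+ 2).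
    by apply/funext => v; rewrite qot_objE.
  apply: (@continuous_sum2 _
    (fun i j v => C i j * vec_mx v i j + lam / 2 * vec_mx v i j ^+ 2)) => i j.
  by apply: continuous_quadratic; apply: continuous_vec_mx_entry.
have U11_nonempty : [set v | U11 (vec_mx v)] !=set0.
  by exists (mxvec 1%:M); rewrite /= mxvecK.
have [v v_in v_min] := EVT_min_rV U11_nonempty transport_polytope_compact
  (continuous_subspaceT f_cont).
exists (vec_mx v); split=> [|G GU]; first by move: v_in; rewrite inE.
by rewrite -[G]mxvecK; apply: v_min; rewrite inE /= mxvecK.
Qed.

Lemma in_U2_midpoint (a b : 'I_N -> R) G1 G2 : in_U2 a b G1 -> in_U2 a b G2 ->
  in_U2 a b (2^-1 *: (G1 + G2)).
Proof.
move=> [[G1_ge0 G1_row] G1_col] [[G2_ge0 G2_row] G2_col].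
split; [split=> [i j|i]|move=> j]; rewrite ?mxE.
- by apply: mulr_ge0; [rewrite invr_ge0 | apply: addr_ge0].
- by under eq_bigr do rewrite !mxE; rewrite -mulr_sumr big_split /= G1_row G2_row; field.
- by under eq_bigr do rewrite !mxE; rewrite -mulr_sumr big_split /= G1_col G2_col; field.
Qed.

(* Parallelogram law: [qot_obj] is strictly convex as soon as [0 < lam]. *)
Lemma qot_obj_midpoint C G1 G2 : qot_obj lam C (2^-1 *: (G1 + G2)) =
  (qot_obj lam C G1 + qot_obj lam C G2) / 2 - lam / 8 * frob_sq (G1 - G2).
Proof.
rewrite /frob_sq !qot_objE -big_split /= mulr_suml mulr_sumr -sumrB.
apply: eq_bigr => i _; rewrite -big_split /= mulr_suml mulr_sumr -sumrB.
by apply: eq_bigr => j _; rewrite !mxE; field.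
Qed.

Lemma qot_minimizer_unique C G1 G2 : 0 < lam ->
  is_minimizer U11 (qot_obj lam C) G1 -> is_minimizer U11 (qot_obj lam C) G2 ->
  G1 = G2.
Proof.
move=> lam_gt0 [G1U G1_min] [G2U G2_min].
have le_mid := G1_min _ (in_U2_midpoint G1U G2U).
have le12 := G1_min _ G2U; have le21 := G2_min _ G1U.
rewrite qot_obj_midpoint in le_mid.
have : lam / 8 * frob_sq (G1 - G2) <= 0 by lra.
rewrite pmulr_rle0 ?divr_gt0 // => frob_le0.
have frob_ge0 : 0 <= frob_sq (G1 - G2).
  by do 2!(apply: sumr_ge0 => ? _); apply: sqr_ge0.
have frob0 : frob_sq (G1 - G2) = 0 by apply/eqP; rewrite eq_le frob_le0 frob_ge0.
apply/matrixP => i j; apply/eqP; rewrite -subr_eq0.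
have := psum2_eq0 (fun i j => sqr_ge0 ((G1 - G2) i j)) frob0 i j.
by rewrite !mxE => /eqP; rewrite sqrf_eq0.
Qed.

End QuadraticOT.

Section IOTObjective.
Variables (R : realType) (N : nat) (tau : R).
Implicit Types (S G : 'M[R]_N).

Lemma softmax_in_U S : in_U (@cst R N 1) (softmax tau S).
Proof. by split=> [i j|i]; [exact/ltW/softmax_gt0 | exact: softmax_row_sum]. Qed.

Lemma sum_in_U_cst (a : R) G : in_U (@cst R N a) G ->
  \sum_(i < N) \sum_(j < N) G i j = N%:R * a.
Proof.
by case=> _ G_row; under eq_bigr do rewrite G_row; rewrite sumr_const card_ord mulr_natl.
Qed.

Lemma gibbs_cost c S : gibbs tau (cost c S) = (N%:R)^-1 *: softmax tau S.
Proof. by rewrite /gibbs softmax_cost. Qed.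

Lemma KLdiv_Gamma_g S :
  KLdiv (Gamma_g R N) ((N%:R)^-1 *: softmax tau S) = (N%:R)^-1 * L_sup tau S.
Proof.
rewrite KLdivE L_supE mulrN mulr_sumr -sumrN; apply: eq_bigr => i _.
have N_gt0 : 0 < N%:R :> R by rewrite ltr0n; apply: leq_ltn_trans (ltn_ord i).
have s_gt0 := softmax_gt0 tau S i i.
have := softmax_row_sum tau S i; rewrite (bigD1 i) //= => row_i.
rewrite (bigD1 i) //= (eq_bigr (fun j => (N%:R)^-1 * softmax tau S i j)); last first.
  by move=> j ji; rewrite !mxE eq_sym (negPf ji) mul0r /kl !mul0r !subr0 add0r.
rewrite -mulr_sumr (_ : \sum_(j < N | j != i) _ = 1 - softmax tau S i i); last by lra.
rewrite /kl [Gamma_g R N i i]mxE [((N%:R)^-1 *: softmax tau S) i i]mxE eqxx.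
rewrite (_ : true%:R = 1 :> R) //.
set s := softmax tau S i i in s_gt0 *.
rewrite (_ : 1 / N%:R / (N%:R^-1 * s) = s^-1); last by field; rewrite !gt_eqF.
by rewrite lnV ?posrE //; ring.
Qed.

Lemma KLdiv_soft_label S G : (0 < N)%N -> in_U (@cst R N 1) G ->
  KLdiv G ((N%:R)^-1 *: softmax tau S) = L_soft tau G S +
    (\sum_(i < N) \sum_(j < N) G i j * ln (G i j) + N%:R * ln N%:R - N%:R + 1).
Proof.
move=> N_gt0 GU; have [G_ge0 _] := GU; rewrite -(ltr0n R) in N_gt0.
have term i j : kl (G i j) (((N%:R)^-1 *: softmax tau S) i j) =
    G i j * ln (G i j) - G i j * ln (softmax tau S i j) + (ln N%:R - 1) * G i j
    + (N%:R)^-1 * softmax tau S i j.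
  have s_gt0 := softmax_gt0 tau S i j.
  rewrite mxE klE ?mulr_gt0 ?invr_gt0 // lnM ?posrE ?invr_gt0 // lnV ?posrE //.
  by ring.
rewrite KLdivE L_softE; under eq_bigr do under eq_bigr do rewrite term.
rewrite !pair_bigA /= !big_split /= -!mulr_sumr -!pair_bigA /=.
rewrite (sum_in_U_cst GU) (sum_in_U_cst (softmax_in_U S)) sumrN.
by field; rewrite gt_eqF.
Qed.

End IOTObjective.

Lemma minimizes_separable (R : realType) (A B : Type) (h : A * B -> R)
    (f : A -> R) (g : B -> R) (k K : R) (a0 : A) (b0 : B) :
  0 < k -> (forall a b, h (a, b) = k * f a + g b + K) ->
  minimizes h (a0, b0) <-> minimizes f a0 /\ minimizes g b0.
Proof.
move=> k_gt0 hE; split=> [h_min|[f_min g_min] [a b]].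
- split=> [a|b]; last by have := h_min (a0, b); rewrite !hE; lra.
  by rewrite -(ler_pM2l k_gt0); have := h_min (a, b0); rewrite !hE; lra.
- have := f_min a; rewrite -(ler_pM2l k_gt0) => f_le.
  by have := g_min b; rewrite !hE; lra.
Qed.

Theorem proposition2
  (R : realType) (N d : nat) (tau lam mu c : R)
  (Theta Psi : Type)
  (x y : Theta -> 'I_N -> 'rV[R]_d)
  (z : Psi -> 'I_N -> 'rV[R]_d)
  (u : 'I_N -> 'rV[R]_d) :
  (1 < N)%N -> 0 < tau -> 0 < lam -> 0 <= mu ->
  (forall th i, normv (x th i) = 1) ->
  (forall th i, normv (y th i) = 1) ->
  (forall ps i, normv (z ps i) = 1) ->
  (forall ps i j, i != j -> z ps i != z ps j) ->
  (forall i, normv (u i) = 1) ->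
  let Cfix := cost c (sim u u) in
  let Ctheta := fun th => cost c (sim (x th) (y th)) in
  let Cpsi := fun ps => cost c (sim (z ps) (z ps)) in
  let U11 := in_U2 (@cst R N 1) (@cst R N 1) in
  let UN := in_U (@cst R N (N%:R)^-1) in
  (exists! Ghat : 'M[R]_N, is_minimizer U11 (qot_obj lam Cfix) Ghat) /\
  (forall th, exists! G : 'M[R]_N, is_minimizer UN (eot_obj tau (Ctheta th)) G) /\
  (forall ps, exists! G : 'M[R]_N, is_minimizer UN (eot_obj tau (Cpsi ps)) G) /\
  (forall (Ghat : 'M[R]_N) (Gth : Theta -> 'M[R]_N) (Gps : Psi -> 'M[R]_N),
    is_minimizer U11 (qot_obj lam Cfix) Ghat ->
    (forall th, is_minimizer UN (eot_obj tau (Ctheta th)) (Gth th)) ->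
    (forall ps, is_minimizer UN (eot_obj tau (Cpsi ps)) (Gps ps)) ->
    let Lsup := fun th => L_sup tau (sim (x th) (y th)) in
    let Lsoft := fun ps => L_soft tau Ghat (sim (z ps) (z ps)) in
    let Lreg := fun ps => L_reg (z ps) in
    let J := fun tp : Theta * Psi =>
      KLdiv (Gamma_g R N) (Gth tp.1) + KLdiv Ghat (Gps tp.2) + mu * Lreg tp.2 in
    let Ltotal := fun tp : Theta * Psi => Lsup tp.1 + Lsoft tp.2 + mu * Lreg tp.2 in
    let K := \sum_(i < N) \sum_(j < N) Ghat i j * ln (Ghat i j)
             + N%:R * ln (N%:R) - N%:R + 1 in
    (forall th ps,
       J (th, ps) = (N%:R)^-1 * Lsup th + Lsoft ps + mu * Lreg ps + K) /\
    (forall th0 ps0,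
       (minimizes J (th0, ps0) <->
          minimizes Lsup th0 /\ minimizes (fun ps => Lsoft ps + mu * Lreg ps) ps0) /\
       (minimizes Lsup th0 /\ minimizes (fun ps => Lsoft ps + mu * Lreg ps) ps0 <->
          minimizes Ltotal (th0, ps0)))).
Proof.
move=> N_gt1 tau_gt0 lam_gt0 _ _ _ _ _ _ Cfix Ctheta Cpsi U11 UN.
have N_gt0 : (0 < N)%N by apply: ltnW.
have eot_unique C : exists! G, is_minimizer UN (eot_obj tau C) G.
  exists (gibbs tau C); split=> [|G]; first exact/(eot_minimizerP tau_gt0).
  by move/(eot_minimizerP tau_gt0).
split.
  have [G G_min] := qot_minimizer_exists lam Cfix.
  by exists G; split=> // G'; apply: qot_minimizer_unique.
split=> [th|]; first exact: eot_unique.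
split=> [ps|]; first exact: eot_unique.
move=> Ghat Gth Gps [[GhatU _] _] Gth_min Gps_min Lsup Lsoft Lreg J Ltotal K.
have JE th ps : J (th, ps) = (N%:R)^-1 * Lsup th + Lsoft ps + mu * Lreg ps + K.
  have /(eot_minimizerP tau_gt0) Gth_E := Gth_min th.
  have /(eot_minimizerP tau_gt0) Gps_E := Gps_min ps.
  rewrite /J /= Gth_E Gps_E !gibbs_cost KLdiv_Gamma_g KLdiv_soft_label //.
  by rewrite /Lsup /Lsoft /K; ring.
split=> // th0 ps0; split.
  apply: (minimizes_separable (k := (N%:R)^-1) (K := K)) => [|th ps].
    by rewrite invr_gt0 ltr0n.
  by rewrite JE; ring.
symmetry; apply: (minimizes_separable (k := 1) (K := 0)) => [|th ps].
  exact: ltr01.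
by rewrite /Ltotal /=; ring.
Qed.
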